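(* Let $p=2$. For every $\boldsymbol\lambda\in\mathbb Q^2$, \[ \mathbb{G}_{\boldsymbol{\lambda}}(\tau)= \sum_{\mathbf n\in\mathbb N_0^2} q^{2Q\left(\mathbf{n}+\boldsymbol{\lambda}+\left(\frac12,\frac12\right)\right)} -\sum_{n_2>n_1\geq 0} q^{2Q\left(\mathbf{n}+\boldsymbol{\lambda}+\left(\frac12,\, 0\right)\right)} -\sum_{n_1>n_2\geq 0} q^{2Q\left(\mathbf{n}+\boldsymbol{\lambda}+\left(0,\frac12\right)\right)}. \]
   Context: $q:=e^{2\pi i\tau}$, $\tau\in\mathbb H$. $Q(\mathbf n):=n_1^2+n_2^2-n_1n_2$; $\mathbb N=\{1,2,\dots\}$, $\mathbb N_0=\{0,1,2,\dots\}$; the sums over $n_2>n_1\ge0$ etc. are over integer pairs $\mathbf n=(n_1,n_2)$. With $p=2$, for $\boldsymbol{\lambda}\in\mathbb Q^2$, \begin{multline*} \mathbb{G}_{\boldsymbol{\lambda}}(\tau):=\sum_{\mathbf{n} \in \mathbb N^2} {\rm min}(n_1,n_2)\,q^{2 Q\left(\mathbf n+\boldsymbol{\lambda}- \left(\frac12, \frac12\right)\right)} \Big(1-q^{2\left(n_1+\lambda_1\right)-\left(n_2+\lambda_2\right)}-q^{2\left(n_2+\lambda_2\right)-\left(n_1+\lambda_1\right)}\\+q^{3\left(n_1+\lambda_1\right)}+q^{3\left(n_2+\lambda_2\right)}-q^{2\left(n_1+\lambda_1\right)+2\left(n_2+\lambda_2\right)}\Big). \end{multline*} *)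

From Stdlib Require Import Reals QArith.
From Coquelicot Require Import Coquelicot.
Open Scope R_scope.

Definition cexp (z : C) : C :=
  (exp (Re z) * cos (Im z), exp (Re z) * sin (Im z)).

Definition qpow (tau : C) (x : R) : C :=
  cexp (Cmult (Cmult (0, 2 * PI) tau) (RtoC x)).

Definition Qf (x1 x2 : R) : R := x1 ^ 2 + x2 ^ 2 - x1 * x2.

Definition psum2 (f : nat -> nat -> C) (N : nat) : C :=
  sum_n (fun i => sum_n (fun j => f i j) N) N.

Definition sum2_is (f : nat -> nat -> C) (l : C) : Prop :=
  filterlim (psum2 f) eventually (locally l).

Definition indic (b : bool) (z : C) : C := if b then z else RtoC 0.

(* summand of G_lambda(tau); the sum ranges over n in N^2, i.e. n1,n2 >= 1 *)
Definition G_term (tau : C) (l1 l2 : R) (n1 n2 : nat) : C :=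
  let a := INR n1 + l1 in
  let b := INR n2 + l2 in
  indic ((1 <=? n1)%nat && (1 <=? n2)%nat)
   (Cmult (Cmult (RtoC (INR (Nat.min n1 n2)))
                 (qpow tau (2 * Qf (a - /2) (b - /2))))
     (Cminus (Cplus (Cminus (Cminus (RtoC 1) (qpow tau (2 * a - b)))
                            (qpow tau (2 * b - a)))
                    (Cplus (qpow tau (3 * a)) (qpow tau (3 * b))))
             (qpow tau (2 * a + 2 * b)))).

Definition A_term (tau : C) (l1 l2 : R) (n1 n2 : nat) : C :=
  qpow tau (2 * Qf (INR n1 + l1 + /2) (INR n2 + l2 + /2)).

Definition B_term (tau : C) (l1 l2 : R) (n1 n2 : nat) : C :=
  indic (n1 <? n2)%nat (qpow tau (2 * Qf (INR n1 + l1 + /2) (INR n2 + l2))).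

Definition C_term (tau : C) (l1 l2 : R) (n1 n2 : nat) : C :=
  indic (n2 <? n1)%nat (qpow tau (2 * Qf (INR n1 + l1) (INR n2 + l2 + /2))).

From Stdlib Require Import Reals QArith Lia Lra.
From Coquelicot Require Import Coquelicot.
Open Scope R_scope.

(* Write h, k, l for the summands of the three series on the right (k and l without their
   range restriction).  Multiplying q^{2Q(n+λ-(1/2,1/2))} into the bracket turns the summand
   of G_λ into min(n1,n2) times
     h(n1-1,n2-1) - l(n1,n2-1) - k(n1-1,n2) + k(n1,n2) + l(n1,n2) - h(n1,n2),
   a sum of first differences in n1 (of k and of h(.,n2-1)) and in n2 (of l and of h).
   Summation by parts against the weight min(n1,n2), whose increment in n1 is the indicator
   of n1 < n2, turns the square partial sums of G_λ into those of h, of k over n1 < n2 and of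
   l over n1 > n2, up to terms on the edge of the square.  Since Q is positive definite, all
   terms are O(exp(-3 max(n1,n2))); this makes the edge terms vanish and the three series
   converge. *)

(* [sum_n] over [C] is typed in [AbelianMonoid.sort C_AbelianMonoid], which [ring] does not
   recognise as [C]. *)
Ltac ring_C := match goal with |- ?a = ?b => change (@eq C a b) end; ring.

Lemma exp_le x y : x <= y -> exp x <= exp y.
Proof. intros [H|H]; [left; apply exp_increasing, H | right; rewrite H; reflexivity]. Qed.

Lemma exp_pow_INR a n : exp a ^ n = exp (INR n * a).
Proof.
  induction n as [|n IH]; simpl pow.
  - rewrite Rmult_0_l, exp_0. reflexivity.
  - rewrite IH, <- exp_plus, S_INR. f_equal. ring.
Qed.

Lemma pow3_succ_le_exp x : 0 <= x + 1 -> (x + 1) ^ 3 <= exp (3 * x).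
Proof.
  intros Hx. replace (3 * x) with (INR 3 * x) by (simpl; ring).
  rewrite <- exp_pow_INR. apply pow_incr. pose proof (exp_ineq1_le x). lra.
Qed.

Lemma sqr_succ_mul_exp_le_inv y : 0 < y -> (y + 1) ^ 2 * exp (-3 * y) <= / y.
Proof.
  intros Hy. apply (Rmult_le_reg_l y); [exact Hy|]. rewrite Rinv_r by lra.
  pose proof (pow3_succ_le_exp y ltac:(lra)). pose proof (exp_pos (-3 * y)).
  assert (E : exp (3 * y) * exp (-3 * y) = 1)
    by (rewrite <- exp_plus; replace (3 * y + -3 * y) with 0 by ring; apply exp_0).
  nra.
Qed.

Lemma exp_neg_sqr_le c mu x : 0 < c ->
  exp (- c * (x + mu) ^ 2) <= exp (9 / (4 * c) - 3 * mu) * exp (-3 * x).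
Proof.
  intros Hc. rewrite <- exp_plus. apply exp_le.
  assert (E : 9 / (4 * c) - 3 * mu + -3 * x - (- c * (x + mu) ^ 2)
              = (2 * c * (x + mu) - 3) ^ 2 / (4 * c)) by (field; lra).
  assert (0 <= (2 * c * (x + mu) - 3) ^ 2 / (4 * c))
    by (apply Rmult_le_pos; [apply pow2_ge_0 | left; apply Rinv_0_lt_compat; lra]).
  lra.
Qed.

Lemma sum_Sn_C (f : nat -> C) n : sum_n f (S n) = Cplus (sum_n f n) (f (S n)).
Proof. exact (sum_Sn f n). Qed.

Lemma sum_n_Cplus (f g : nat -> C) n :
  sum_n (fun i => Cplus (f i) (g i)) n = Cplus (sum_n f n) (sum_n g n).
Proof. exact (sum_n_plus f g n). Qed.

Lemma sum_n_Cminus (f g : nat -> C) n :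
  sum_n (fun i => Cminus (f i) (g i)) n = Cminus (sum_n f n) (sum_n g n).
Proof.
  induction n as [|n IH]; rewrite ?sum_O, ?sum_Sn_C, ?IH; [reflexivity | ring_C].
Qed.

Lemma sum_n_shift (f : nat -> C) n :
  sum_n f (S n) = Cplus (f 0%nat) (sum_n (fun i => f (S i)) n).
Proof.
  induction n as [|n IH].
  - rewrite sum_Sn_C, !sum_O. reflexivity.
  - rewrite sum_Sn_C, IH, (sum_Sn_C (fun i => f (S i))). ring_C.
Qed.

Lemma Cmod_sum_n_le (f : nat -> C) n B :
  (forall i, (i <= n)%nat -> Cmod (f i) <= B) -> Cmod (sum_n f n) <= INR (S n) * B.
Proof.
  induction n as [|n IH]; intros Hf.
  - rewrite sum_O. simpl. specialize (Hf 0%nat (le_n 0)). lra.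
  - rewrite sum_Sn_C, S_INR. eapply Rle_trans; [apply Cmod_triangle|].
    specialize (IH (fun i Hi => Hf i (le_S _ _ Hi))). specialize (Hf (S n) (le_n _)). lra.
Qed.

Lemma psum2_ext (f g : nat -> nat -> C) N :
  (forall i j, f i j = g i j) -> psum2 f N = psum2 g N.
Proof. intros E. apply sum_n_ext; intro i. apply sum_n_ext; intro j. apply E. Qed.

Lemma psum2_transpose (f : nat -> nat -> C) N : psum2 (fun i j => f j i) N = psum2 f N.
Proof. exact (sum_n_switch (fun i j => f j i) N N). Qed.

Lemma psum2_Cplus (f g : nat -> nat -> C) N :
  psum2 (fun i j => Cplus (f i j) (g i j)) N = Cplus (psum2 f N) (psum2 g N).
Proof. unfold psum2. rewrite <- sum_n_Cplus. apply sum_n_ext; intro i. apply sum_n_Cplus. Qed.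

Lemma psum2_Cminus (f g : nat -> nat -> C) N :
  psum2 (fun i j => Cminus (f i j) (g i j)) N = Cminus (psum2 f N) (psum2 g N).
Proof. unfold psum2. rewrite <- sum_n_Cminus. apply sum_n_ext; intro i. apply sum_n_Cminus. Qed.

Lemma sum_by_parts (w : nat -> R) (u : nat -> C) N : w 0%nat = 0 ->
  sum_n (fun n => Cmult (RtoC (w n)) (Cminus (u n) (u (pred n)))) (S N)
  = Cminus (Cmult (RtoC (w (S N))) (u (S N)))
           (sum_n (fun n => Cmult (RtoC (w (S n) - w n)) (u n)) N).
Proof.
  intros w0. induction N as [|N IH].
  - rewrite sum_Sn_C, !sum_O. simpl pred. rewrite RtoC_minus, w0. ring_C.
  - rewrite sum_Sn_C, IH, (sum_Sn_C (fun n => Cmult (RtoC (w (S n) - w n)) (u n))).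
    simpl pred. rewrite RtoC_minus. ring_C.
Qed.

Lemma INR_min_succ_sub n c :
  INR (Nat.min (S n) c) - INR (Nat.min n c) = if (n <? c)%nat then 1 else 0.
Proof.
  destruct (Nat.ltb_spec n c).
  - rewrite !Nat.min_l, S_INR by lia. ring.
  - rewrite !Nat.min_r by lia. ring.
Qed.

Lemma sum_by_parts_min (u : nat -> C) c N :
  sum_n (fun n => Cmult (RtoC (INR (Nat.min n c))) (Cminus (u n) (u (pred n)))) (S N)
  = Cminus (Cmult (RtoC (INR (Nat.min (S N) c))) (u (S N)))
           (sum_n (fun n => indic (n <? c)%nat (u n)) N).
Proof.
  rewrite (sum_by_parts (fun n => INR (Nat.min n c))) by reflexivity.
  f_equal. apply sum_n_ext; intro n.
  rewrite INR_min_succ_sub. unfold indic. destruct (n <? c)%nat; ring_C.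
Qed.

Definition wdiff (u : nat -> nat -> C) (i j : nat) : C :=
  Cmult (RtoC (INR (Nat.min i j))) (Cminus (u i j) (u (pred i) j)).

Definition upper (u : nat -> nat -> C) (i j : nat) : C := indic (i <? j)%nat (u i j).

Definition lower (u : nat -> nat -> C) (i j : nat) : C := indic (j <? i)%nat (u i j).

Definition edge (u : nat -> nat -> C) (M : nat) : C :=
  sum_n (fun j => Cmult (RtoC (INR (Nat.min (S M) j))) (u (S M) j)) (S M).

Lemma psum2_wdiff (u : nat -> nat -> C) M :
  psum2 (wdiff u) (S M) = Cminus (edge u M) (psum2 (upper u) (S M)).
Proof.
  rewrite <- (psum2_transpose (wdiff u)), <- (psum2_transpose (upper u)).
  unfold psum2, edge. rewrite <- sum_n_Cminus.
  apply sum_n_ext_loc; intros j Hj.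
  unfold wdiff. rewrite sum_by_parts_min, sum_Sn_C.
  unfold upper. destruct (Nat.ltb_spec (S M) j); [lia|].
  unfold indic at 3. ring_C.
Qed.

Lemma psum2_upper_transpose (u : nat -> nat -> C) N :
  psum2 (upper (fun i j => u j i)) N = psum2 (lower u) N.
Proof. exact (psum2_transpose (lower u) N). Qed.

Lemma psum2_upper_pred (h : nat -> nat -> C) M :
  psum2 (upper (fun i j => h i (pred j))) (S M)
  = Cminus (Cplus (psum2 h M) (sum_n (h (S M)) M)) (psum2 (lower h) (S M)).
Proof.
  assert (Hrow : forall i, (i <= S M)%nat ->
    Cplus (sum_n (fun j => upper (fun a b => h a (pred b)) i j) (S M))
          (sum_n (fun j => lower h i j) (S M)) = sum_n (h i) M).
  { intros i Hi. unfold upper, lower.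
    rewrite sum_n_shift, sum_Sn_C. cbn [pred].
    destruct (Nat.ltb_spec (S M) i); [lia|].
    rewrite <- (sum_n_ext (fun j => Cplus (indic (i <? S j)%nat (h i j))
                                          (indic (j <? i)%nat (h i j))) (h i)).
    - rewrite sum_n_Cplus. unfold indic at 1 4.
      destruct (i <? 0)%nat eqn:E; [apply Nat.ltb_lt in E; lia|]. ring_C.
    - intro j. unfold indic.
      destruct (Nat.ltb_spec i (S j)), (Nat.ltb_spec j i); try lia; ring_C. }
  assert (Hsum : Cplus (psum2 (upper (fun i j => h i (pred j))) (S M)) (psum2 (lower h) (S M))
                 = Cplus (psum2 h M) (sum_n (h (S M)) M)).
  { unfold psum2. rewrite <- sum_n_Cplus.
    transitivity (sum_n (fun i => sum_n (h i) M) (S M)).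
    - apply sum_n_ext_loc. exact Hrow.
    - apply sum_Sn_C. }
  rewrite <- Hsum. ring_C.
Qed.

Definition Gshape (h k l : nat -> nat -> C) (i j : nat) : C :=
  Cmult (RtoC (INR (Nat.min i j)))
    (Cminus (Cplus (Cplus (Cminus (Cminus (h (pred i) (pred j)) (l i (pred j)))
                                  (k (pred i) j)) (k i j)) (l i j)) (h i j)).

Lemma Gshape_wdiff h k l i j :
  Gshape h k l i j
  = Cminus (Cminus (Cplus (wdiff k i j) (wdiff (fun i j => l j i) j i))
                   (wdiff (fun i j => h i (pred j)) i j))
           (wdiff (fun i j => h j i) j i).
Proof. unfold Gshape, wdiff. rewrite (Nat.min_comm j i). ring_C. Qed.

Definition boundary (h k l : nat -> nat -> C) (M : nat) : C :=
  Cplus (Cplus (Cminus (Cminus (sum_n (h (S M)) M) (edge (fun i j => h i (pred j)) M))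
                       (edge (fun i j => h j i) M))
               (edge k M))
        (edge (fun i j => l j i) M).

Lemma psum2_Gshape h k l M :
  psum2 (Gshape h k l) (S M)
  = Cplus (Cminus (Cminus (psum2 h M) (psum2 (upper k) (S M))) (psum2 (lower l) (S M)))
          (boundary h k l M).
Proof.
  rewrite (psum2_ext _ _ _ (Gshape_wdiff h k l)).
  rewrite !psum2_Cminus, psum2_Cplus.
  rewrite (psum2_transpose (wdiff (fun i j => l j i))),
          (psum2_transpose (wdiff (fun i j => h j i))).
  rewrite !psum2_wdiff, psum2_upper_pred.
  rewrite !psum2_upper_transpose.
  unfold boundary. ring_C.
Qed.

(* The rate 3 beats the quadratically many terms on the edge of a square. *)
Definition decays (f : nat -> nat -> C) (K : R) : Prop :=
  forall i j, Cmod (f i j) <= K * exp (-3 * INR i) /\ Cmod (f i j) <= K * exp (-3 * INR j).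

Lemma decays_nonneg f K : decays f K -> 0 <= K.
Proof.
  intros D. destruct (D 0%nat 0%nat) as [H _].
  rewrite Rmult_0_r, exp_0, Rmult_1_r in H. pose proof (Cmod_ge_0 (f 0%nat 0%nat)). lra.
Qed.

Lemma decays_le f K K' : K <= K' -> decays f K -> decays f K'.
Proof.
  intros HK D i j. destruct (D i j).
  pose proof (exp_pos (-3 * INR i)). pose proof (exp_pos (-3 * INR j)). split; nra.
Qed.

Lemma decays_ext f g K : (forall i j, f i j = g i j) -> decays g K -> decays f K.
Proof. intros E D i j. rewrite E. apply D. Qed.

Lemma Cmod_indic_le b z : Cmod (indic b z) <= Cmod z.
Proof. destruct b; simpl; [lra|]. rewrite Cmod_0. apply Cmod_ge_0. Qed.

Lemma decays_upper f K : decays f K -> decays (upper f) K.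
Proof.
  intros D i j. pose proof (Cmod_indic_le (i <? j)%nat (f i j)).
  destruct (D i j). unfold upper. lra.
Qed.

Lemma decays_lower f K : decays f K -> decays (lower f) K.
Proof.
  intros D i j. pose proof (Cmod_indic_le (j <? i)%nat (f i j)).
  destruct (D i j). unfold lower. lra.
Qed.

Definition shell (f : nat -> nat -> C) (n : nat) : C :=
  match n with
  | O => f 0%nat 0%nat
  | S N => Cplus (sum_n (fun j => f (S N) j) N) (sum_n (fun i => f i (S N)) (S N))
  end.

Lemma psum2_shell f N : psum2 f N = sum_n (shell f) N.
Proof.
  induction N as [|N IH].
  - unfold psum2. rewrite !sum_O. reflexivity.
  - rewrite sum_Sn_C, <- IH. unfold psum2. cbn [shell].
    rewrite (sum_n_ext _ (fun i => Cplus (sum_n (fun j => f i j) N) (f i (S N))))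
      by (intro; apply sum_Sn_C).
    rewrite sum_n_Cplus, sum_Sn_C. ring_C.
Qed.

Lemma Cmod_shell_le f K n : decays f K -> Cmod (shell f n) <= 3 * K * exp (-2) ^ n.
Proof.
  intros D. pose proof (decays_nonneg f K D) as HK.
  rewrite exp_pow_INR. destruct n as [|N].
  - cbn [shell]. destruct (D 0%nat 0%nat) as [H _]. simpl INR in *.
    rewrite Rmult_0_r, Rmult_0_l, exp_0 in *. lra.
  - cbn [shell]. set (x := INR (S N)).
    assert (Hrow : Cmod (sum_n (fun j => f (S N) j) N) <= INR (S N) * (K * exp (-3 * x)))
      by (apply Cmod_sum_n_le; intros i _; apply D).
    assert (Hcol : Cmod (sum_n (fun i => f i (S N)) (S N)) <= INR (S (S N)) * (K * exp (-3 * x)))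
      by (apply Cmod_sum_n_le; intros i _; apply D).
    rewrite S_INR in Hcol. fold x in Hrow, Hcol.
    assert (Hx : 0 <= x) by apply pos_INR.
    (* [2x + 1 <= 3 e^x] from [1 + x <= e^x] *)
    assert (Hlin : (2 * x + 1) * exp (- x) <= 3).
    { pose proof (exp_ineq1_le x). pose proof (exp_pos (- x)).
      assert (E : exp x * exp (- x) = 1) by (rewrite <- exp_plus, Rplus_opp_r; apply exp_0).
      nra. }
    assert (E3 : exp (-3 * x) = exp (-2 * x) * exp (- x))
      by (rewrite <- exp_plus; f_equal; ring).
    pose proof (exp_pos (-2 * x)). pose proof (exp_pos (- x)).
    replace (x * -2) with (-2 * x) by ring.
    assert (H3 : K * exp (-2 * x) * ((2 * x + 1) * exp (- x)) <= K * exp (-2 * x) * 3)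
      by (apply Rmult_le_compat_l; nra).
    eapply Rle_trans; [apply Cmod_triangle|].
    rewrite E3 in Hrow, Hcol. lra.
Qed.

Lemma sum2_is_of_decays f K : decays f K -> exists l, sum2_is f l.
Proof.
  intros D.
  assert (Hs : ex_series (V := C_CompleteNormedModule) (shell f)).
  { apply (ex_series_le (V := C_CompleteNormedModule) _ (fun n => 3 * K * exp (-2) ^ n)).
    - intro n. apply (Cmod_shell_le f K n D).
    - apply (ex_series_scal_l (V := R_NormedModule) (3 * K) (fun n => exp (-2) ^ n)).
      apply ex_series_geom. rewrite Rabs_pos_eq by (left; apply exp_pos).
      rewrite <- exp_0. apply exp_increasing. lra. }
  destruct Hs as [l Hl]. exists l.
  eapply filterlim_ext; [|exact Hl]. intro N. symmetry. apply psum2_shell.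
Qed.

Lemma Cmod_Cminus_le a b : Cmod (Cminus a b) <= Cmod a + Cmod b.
Proof. rewrite <- (Cmod_opp b). apply Cmod_triangle. Qed.

Lemma Cmod_edge_le u M B :
  (forall j, Cmod (u (S M) j) <= B) -> Cmod (edge u M) <= INR (S (S M)) * (INR (S M) * B).
Proof.
  intros Hu. apply Cmod_sum_n_le; intros j _.
  rewrite Cmod_mult, Cmod_R, Rabs_pos_eq by apply pos_INR.
  apply Rmult_le_compat; auto using pos_INR, Cmod_ge_0.
  apply le_INR, Nat.le_min_l.
Qed.

Lemma Cmod_boundary_le h k l K M : decays h K -> decays k K -> decays l K ->
  Cmod (boundary h k l M) <= 5 * K / INR (S M).
Proof.
  intros Dh Dk Dl. pose proof (decays_nonneg h K Dh) as HK.
  set (y := INR (S M)). set (B := K * exp (-3 * y)).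
  assert (Hy : 0 < y) by (apply lt_0_INR; lia).
  assert (Ey : INR (S (S M)) = y + 1) by apply S_INR.
  assert (HB : 0 <= B) by (pose proof (exp_pos (-3 * y)); unfold B; nra).
  assert (E1 : Cmod (edge (fun i j => h i (pred j)) M) <= (y + 1) * (y * B))
    by (rewrite <- Ey; apply Cmod_edge_le; intro j; apply Dh).
  assert (E2 : Cmod (edge (fun i j => h j i) M) <= (y + 1) * (y * B))
    by (rewrite <- Ey; apply Cmod_edge_le; intro j; apply Dh).
  assert (E3 : Cmod (edge k M) <= (y + 1) * (y * B))
    by (rewrite <- Ey; apply Cmod_edge_le; intro j; apply Dk).
  assert (E4 : Cmod (edge (fun i j => l j i) M) <= (y + 1) * (y * B))
    by (rewrite <- Ey; apply Cmod_edge_le; intro j; apply Dl).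
  assert (E0 : Cmod (sum_n (h (S M)) M) <= y * B)
    by (apply Cmod_sum_n_le; intros j _; apply Dh).
  assert (Hbd : Cmod (boundary h k l M) <= 5 * (y + 1) ^ 2 * B).
  { unfold boundary.
    eapply Rle_trans; [apply Cmod_triangle|].
    eapply Rle_trans; [apply Rplus_le_compat_r, Cmod_triangle|].
    pose proof (Cmod_Cminus_le (sum_n (h (S M)) M) (edge (fun i j => h i (pred j)) M)).
    pose proof (Cmod_Cminus_le (Cminus (sum_n (h (S M)) M) (edge (fun i j => h i (pred j)) M))
                               (edge (fun i j => h j i) M)).
    nra. }
  apply (Rle_trans _ _ _ Hbd). unfold B, Rdiv.
  replace (5 * (y + 1) ^ 2 * (K * exp (-3 * y))) with (5 * K * ((y + 1) ^ 2 * exp (-3 * y)))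
    by ring.
  apply Rmult_le_compat_l; [lra | apply sqr_succ_mul_exp_le_inv, Hy].
Qed.

Lemma boundary_vanishes h k l K : decays h K -> decays k K -> decays l K ->
  filterlim (boundary h k l) eventually (locally (RtoC 0)).
Proof.
  intros Dh Dk Dl. apply (filterlim_norm_zero (V := C_NormedModule)).
  change (is_lim_seq (fun M => norm (boundary h k l M)) 0).
  apply (is_lim_seq_le_le (fun _ => 0) _ (fun M => 5 * K * / INR (S M))).
  - intro M. change (0 <= Cmod (boundary h k l M) <= 5 * K / INR (S M)).
    split; [apply Cmod_ge_0 | exact (Cmod_boundary_le h k l K M Dh Dk Dl)].
  - apply is_lim_seq_const.
  - replace (Finite 0) with (Rbar_mult (5 * K) 0) by (simpl; f_equal; ring).
    apply is_lim_seq_scal_l. apply (is_lim_seq_incr_1 (fun n => / INR n)).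
    apply (is_lim_seq_inv INR p_infty is_lim_seq_INR). discriminate.
Qed.

Lemma filterlim_Cplus {T} (F : (T -> Prop) -> Prop) {FF : Filter F} (u v : T -> C) (a b : C) :
  filterlim u F (locally a) -> filterlim v F (locally b) ->
  filterlim (fun x => Cplus (u x) (v x)) F (locally (Cplus a b)).
Proof.
  intros Hu Hv.
  exact (filterlim_comp_2 u v Cplus Hu Hv (@filterlim_plus C_AbsRing C_NormedModule a b)).
Qed.

Lemma filterlim_Cminus {T} (F : (T -> Prop) -> Prop) {FF : Filter F} (u v : T -> C) (a b : C) :
  filterlim u F (locally a) -> filterlim v F (locally b) ->
  filterlim (fun x => Cminus (u x) (v x)) F (locally (Cminus a b)).
Proof.
  intros Hu Hv. apply (filterlim_Cplus F u (fun x => Copp (v x)) a (Copp b) Hu).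
  eapply filterlim_comp; [exact Hv | exact (@filterlim_opp C_AbsRing C_NormedModule b)].
Qed.

Lemma sum2_is_succ f l :
  sum2_is f l <-> filterlim (fun M => psum2 f (S M)) eventually (locally l).
Proof.
  split.
  - intros H. eapply filterlim_comp; [|exact H]. apply eventually_subseq. intro; lia.
  - intros H P HP. destruct (H P HP) as [N HN].
    exists (S N). intros [|n] Hn; [lia|]. apply HN. lia.
Qed.

Lemma sum2_is_ext f g l : (forall i j, f i j = g i j) -> sum2_is f l -> sum2_is g l.
Proof. intros E H. eapply filterlim_ext; [|exact H]. intro N. apply psum2_ext, E. Qed.

Theorem sum2_is_Gshape h k l K SA SB SC :
  decays h K -> decays k K -> decays l K ->
  sum2_is h SA -> sum2_is (upper k) SB -> sum2_is (lower l) SC ->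
  sum2_is (Gshape h k l) (Cminus (Cminus SA SB) SC).
Proof.
  intros Dh Dk Dl HA HB HC. apply sum2_is_succ.
  eapply filterlim_ext; [intro M; symmetry; apply psum2_Gshape|].
  rewrite sum2_is_succ in HB, HC.
  rewrite <- (Cplus_0_r (Cminus (Cminus SA SB) SC)).
  apply (filterlim_Cplus eventually); [|exact (boundary_vanishes h k l K Dh Dk Dl)].
  apply (filterlim_Cminus eventually); [apply (filterlim_Cminus eventually)|]; assumption.
Qed.

Lemma cexp_add z w : Cmult (cexp z) (cexp w) = cexp (Cplus z w).
Proof.
  destruct z as [a b], w as [c d]. unfold cexp, Cmult, Cplus. simpl.
  rewrite exp_plus, cos_plus, sin_plus. f_equal; ring.
Qed.

Lemma qpow_add tau x y : Cmult (qpow tau x) (qpow tau y) = qpow tau (x + y).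
Proof. unfold qpow. rewrite cexp_add, RtoC_plus. f_equal. ring. Qed.

Lemma Cmod_qpow tau x : Cmod (qpow tau x) = exp (- (2 * PI * Im tau) * x).
Proof.
  destruct tau as [t1 t2]. unfold qpow, cexp, Cmod, Cmult, RtoC. simpl.
  set (a := exp _). set (th := _ * 0 + _ * x).
  replace (a * cos th * (a * cos th * 1) + a * sin th * (a * sin th * 1)) with (a ^ 2)
    by (pose proof (sin2_cos2 th) as E; unfold Rsqr in E; nra).
  rewrite sqrt_pow2 by (left; apply exp_pos).
  unfold a. f_equal. ring.
Qed.

Lemma sqr_le_2Qf x y : x ^ 2 <= 2 * Qf x y /\ y ^ 2 <= 2 * Qf x y.
Proof. unfold Qf. split; nra. Qed.

Lemma decays_qpow tau a b : 0 < Im tau ->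
  exists K, decays (fun i j => qpow tau (2 * Qf (INR i + a) (INR j + b))) K.
Proof.
  intros Ht. set (c := 2 * PI * Im tau).
  assert (Hc : 0 < c) by (unfold c; pose proof PI_RGT_0; apply Rmult_lt_0_compat; lra).
  exists (exp (9 / (4 * c) - 3 * a) + exp (9 / (4 * c) - 3 * b)).
  intros i j. rewrite Cmod_qpow. fold c.
  destruct (sqr_le_2Qf (INR i + a) (INR j + b)) as [Hi Hj].
  assert (Ei : exp (- c * (2 * Qf (INR i + a) (INR j + b))) <= exp (- c * (INR i + a) ^ 2))
    by (apply exp_le; nra).
  assert (Ej : exp (- c * (2 * Qf (INR i + a) (INR j + b))) <= exp (- c * (INR j + b) ^ 2))
    by (apply exp_le; nra).
  pose proof (exp_neg_sqr_le c a (INR i) Hc). pose proof (exp_neg_sqr_le c b (INR j) Hc).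
  pose proof (exp_pos (9 / (4 * c) - 3 * a)). pose proof (exp_pos (9 / (4 * c) - 3 * b)).
  pose proof (exp_pos (-3 * INR i)). pose proof (exp_pos (-3 * INR j)).
  split; nra.
Qed.

Definition kq (tau : C) (l1 l2 : R) (n1 n2 : nat) : C :=
  qpow tau (2 * Qf (INR n1 + l1 + /2) (INR n2 + l2)).

Definition lq (tau : C) (l1 l2 : R) (n1 n2 : nat) : C :=
  qpow tau (2 * Qf (INR n1 + l1) (INR n2 + l2 + /2)).

Lemma q_terms_decay tau l1 l2 : 0 < Im tau ->
  exists K, decays (A_term tau l1 l2) K /\ decays (kq tau l1 l2) K /\ decays (lq tau l1 l2) K.
Proof.
  intros Ht.
  destruct (decays_qpow tau (l1 + /2) (l2 + /2) Ht) as [K1 D1].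
  destruct (decays_qpow tau (l1 + /2) l2 Ht) as [K2 D2].
  destruct (decays_qpow tau l1 (l2 + /2) Ht) as [K3 D3].
  pose proof (decays_nonneg _ _ D1). pose proof (decays_nonneg _ _ D2).
  pose proof (decays_nonneg _ _ D3).
  exists (K1 + K2 + K3). split; [|split].
  - apply (decays_le _ K1); [lra|]. eapply decays_ext; [|exact D1].
    intros i j. unfold A_term. rewrite !Rplus_assoc. reflexivity.
  - apply (decays_le _ K2); [lra|]. eapply decays_ext; [|exact D2].
    intros i j. unfold kq. rewrite !Rplus_assoc. reflexivity.
  - apply (decays_le _ K3); [lra|]. eapply decays_ext; [|exact D3].
    intros i j. unfold lq. rewrite !Rplus_assoc. reflexivity.
Qed.

Lemma Cmult_qpow_distr tau x y1 y2 y3 y4 y5 (m : C) :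
  Cmult (Cmult m (qpow tau x))
    (Cminus (Cplus (Cminus (Cminus (RtoC 1) (qpow tau y1)) (qpow tau y2))
                   (Cplus (qpow tau y3) (qpow tau y4))) (qpow tau y5))
  = Cmult m (Cminus (Cplus (Cplus (Cminus (Cminus (qpow tau x) (qpow tau (x + y1)))
                                          (qpow tau (x + y2))) (qpow tau (x + y3)))
                           (qpow tau (x + y4))) (qpow tau (x + y5))).
Proof. rewrite <- !qpow_add. ring. Qed.

Lemma G_term_Gshape tau l1 l2 n1 n2 :
  G_term tau l1 l2 n1 n2 = Gshape (A_term tau l1 l2) (kq tau l1 l2) (lq tau l1 l2) n1 n2.
Proof.
  unfold G_term, Gshape.
  destruct n1 as [|i], n2 as [|j]; cbn [Nat.leb andb indic Nat.min pred];
    try (rewrite INR_0; ring_C).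
  rewrite Cmult_qpow_distr. f_equal.
  repeat f_equal; unfold A_term, kq, lq; apply f_equal; unfold Qf; rewrite ?S_INR; field.
Qed.

Theorem lemma3p5 (lam1 lam2 : Q) (tau : C) (Htau : 0 < Im tau) :
  exists SA SB SC : C,
    sum2_is (A_term tau (Q2R lam1) (Q2R lam2)) SA /\
    sum2_is (B_term tau (Q2R lam1) (Q2R lam2)) SB /\
    sum2_is (C_term tau (Q2R lam1) (Q2R lam2)) SC /\
    sum2_is (G_term tau (Q2R lam1) (Q2R lam2)) (Cminus (Cminus SA SB) SC).
Proof.
  set (l1 := Q2R lam1). set (l2 := Q2R lam2).
  destruct (q_terms_decay tau l1 l2 Htau) as (K & Dh & Dk & Dl).
  destruct (sum2_is_of_decays _ _ Dh) as [SA HA].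
  destruct (sum2_is_of_decays _ _ (decays_upper _ _ Dk)) as [SB HB].
  destruct (sum2_is_of_decays _ _ (decays_lower _ _ Dl)) as [SC HC].
  exists SA, SB, SC. split; [exact HA|]. split; [exact HB|]. split; [exact HC|].
  apply (sum2_is_ext (Gshape (A_term tau l1 l2) (kq tau l1 l2) (lq tau l1 l2))).
  - intros i j. symmetry. apply G_term_Gshape.
  - exact (sum2_is_Gshape _ _ _ K _ _ _ Dh Dk Dl HA HB HC).
Qed.
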